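(* Let $(a_n),(b_n)$ be defined by $a_n=2a_{n-1}b_{n-1}$, $b_n=a_{n-1}^2$ for $n\ge2$, with $a_1=2$, $b_1=1$. Then this SNRE is of the dominating type.
   Context: An SNRE $\{a_n,b_n\}$ on two symbols is of the dominating type if it admits a dominate symbol, i.e. either $a_n\ge b_n$ for all $n\in\mathbb{N}$ or $b_n\ge a_n$ for all $n\in\mathbb{N}$. *)

From Stdlib Require Import Arith.

Definition dominating_type (a b : nat -> nat) : Prop :=
  (forall n, 1 <= n -> b n <= a n) \/ (forall n, 1 <= n -> a n <= b n).

From Stdlib Require Import Arith Lia.

(* The ratio r_n = a_n / b_n satisfies r_(n+1) = 2 / r_n, so the interval
   [1, 2] is invariant; it contains r_1 = 2, hence a_n >= b_n for all n. *)

Lemma snre_step_bounds (x y : nat) :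
  y <= x <= 2 * y -> x ^ 2 <= 2 * x * y <= 2 * x ^ 2.
Proof. intros [Hyx Hxy]; simpl; split; nia. Qed.

Section Snre.

Variables a b : nat -> nat.
Hypothesis ha1 : a 1 = 2.
Hypothesis hb1 : b 1 = 1.
Hypothesis ha : forall n, 2 <= n -> a n = 2 * a (n - 1) * b (n - 1).
Hypothesis hb : forall n, 2 <= n -> b n = a (n - 1) ^ 2.

Lemma snre_bounds n : 1 <= n -> b n <= a n <= 2 * b n.
Proof.
  induction n as [|n IH]; intros Hn; [lia|].
  destruct (Nat.eq_dec n 0) as [->|Hn0]; [rewrite ha1, hb1; lia|].
  rewrite (ha (S n)), (hb (S n)) by lia.
  replace (S n - 1) with n by lia.
  apply snre_step_bounds, IH; lia.
Qed.

End Snre.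

Theorem lemma3 (a b : nat -> nat)
  (ha1 : a 1 = 2) (hb1 : b 1 = 1)
  (ha : forall n, 2 <= n -> a n = 2 * a (n - 1) * b (n - 1))
  (hb : forall n, 2 <= n -> b n = a (n - 1) ^ 2) :
  dominating_type a b.
Proof.
  left; intros n Hn.
  apply (snre_bounds a b ha1 hb1 ha hb n Hn).
Qed.
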